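(* Let $S(x)=0$ be an arbitrary smooth closed surface in ${\bf R}^n$. Then there exists a stationary (time-independent) Lorentzian metric on ${\bf R}^n\times{\bf R}$, with inverse tensor $[g^{jk}(x)]_{j,k=0}^n$, such that $S=0$ is an ergosphere of this metric and $\{S(x)=0\}\times{\bf R}$ is an event horizon.
   Context: Coordinates $(x_0,x)$, $x_0$ time, $x\in{\bf R}^n$; the metric has signature $(1,-1,\dots,-1)$ and $g^{00}>0$. The ergosphere is the set where $g_{00}(x)=0$, equivalently where $\det[g^{jk}(x)]_{j,k=1}^n=0$. A closed smooth surface $S_0(x)=0$ gives an event horizon $\{S_0=0\}\times{\bf R}$ if it is characteristic, i.e. $\sum_{j,k=1}^n g^{jk}S_{0x_j}S_{0x_k}=0$ on $S_0=0$, and $\sum_{j=1}^n g^{0j}S_{0x_j}\neq0$ on $S_0=0$ (with $S_{0x}$ the outward normal; the interior is then a black hole if this sum is negative and a white hole if positive). *)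

From HB Require Import structures.
From mathcomp Require Import all_boot all_order all_algebra.
From mathcomp Require Import all_classical all_reals all_analysis.
Set Implicit Arguments. Unset Strict Implicit. Unset Printing Implicit Defensive.
Import Order.TTheory GRing.Theory Num.Theory.
Import numFieldNormedType.Exports.
Local Open Scope ring_scope.
Local Open Scope classical_set_scope.

(* Points of space R^n are row vectors 'rV[R]_n; spatial index i : 'I_n
   corresponds to the coordinate x_{i+1}.  Space-time indices are 'I_n.+1,
   with ord0 the time index x_0 and (lift ord0 i) the spatial index x_{i+1}. *)

Definition evec (R : realType) (n : nat) (i : 'I_n) : 'rV[R]_n := delta_mx 0 i.

Definition partial (R : realType) (n : nat) (i : 'I_n) (f : 'rV[R]_n -> R)
  : 'rV[R]_n -> R := fun x => 'D_(evec R i) f x.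

Fixpoint dpart (R : realType) (n : nat) (l : seq 'I_n) (f : 'rV[R]_n -> R)
  : 'rV[R]_n -> R :=
  match l with
  | [::] => f
  | i :: l' => partial i (dpart l' f)
  end.

Definition smooth (R : realType) (n : nat) (f : 'rV[R]_n -> R) : Prop :=
  forall (l : seq 'I_n) (x : 'rV[R]_n), differentiable (dpart l f) x.

Definition grad_ne0 (R : realType) (n : nat) (S : 'rV[R]_n -> R) (x : 'rV[R]_n) : Prop :=
  exists i : 'I_n, partial i S x != 0.

Definition smooth_closed_surface (R : realType) (n : nat) (S : 'rV[R]_n -> R) : Prop :=
  [/\ smooth S,
      [set x | S x = 0] !=set0,
      compact [set x | S x = 0] &
      forall x, S x = 0 -> grad_ne0 S x].

Definition minkowski (R : realType) (n : nat) : 'M[R]_n.+1 :=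
  diag_mx (\row_(j < n.+1) (if j == ord0 then 1 else -1)).

(* A stationary Lorentzian metric on R^n x R given by its inverse tensor
   g(x) = [g^{jk}(x)]_{j,k=0}^n: smooth in x, symmetric, of signature
   (1,-1,...,-1) (congruent to diag(1,-1,...,-1)), with g^{00} > 0. *)
Definition stationary_lorentzian_inv (R : realType) (n : nat)
  (g : 'rV[R]_n -> 'M[R]_n.+1) : Prop :=
  [/\ forall j k : 'I_n.+1, smooth (fun x => g x j k),
      forall x, (g x)^T = g x,
      forall x, exists2 P : 'M[R]_n.+1, P \in unitmx & P^T *m g x *m P = minkowski R n &
      forall x, 0 < g x ord0 ord0].

(* The ergosphere: the set where g_{00}(x) = 0, g_{jk} being the
   (covariant) metric, i.e. the inverse matrix of [g^{jk}]. *)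
Definition ergosphere (R : realType) (n : nat) (g : 'rV[R]_n -> 'M[R]_n.+1)
  : set 'rV[R]_n := [set x | (invmx (g x)) ord0 ord0 = 0].

Definition event_horizon (R : realType) (n : nat) (g : 'rV[R]_n -> 'M[R]_n.+1)
  (S : 'rV[R]_n -> R) : Prop :=
  forall x, S x = 0 ->
    (\sum_(j < n) \sum_(k < n)
        g x (lift ord0 j) (lift ord0 k) * partial j S x * partial k S x = 0)
    /\ (\sum_(j < n) g x ord0 (lift ord0 j) * partial j S x != 0).

(* Writing p = grad S(x) and b = |p|^2 + S(x)^2 > 0 (positive because 0 is a
   regular value of S), take g = Q diag(1,-1,...,-1) Q^T for the frame Q whose
   first column is the covector (1, p) and whose other columns are sqrt b times
   the spatial unit vectors.  Then g^{jk} = c_j c_k - b [j = k > 0] with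
   c = (1, p), so g is a smooth stationary Lorentzian metric with g^{00} = 1.
   Inverting Q explicitly gives g_{00} = 1 - |p|^2 / b = S^2 / b, whose zero
   set is {S = 0}; on that set g^{jk} S_j S_k = -|p|^2 S^2 = 0 and
   g^{0j} S_j = |p|^2 <> 0. *)
From Pilot Require Import Defs.
From HB Require Import structures.
From mathcomp Require Import all_boot all_order all_algebra.
From mathcomp Require Import all_classical all_reals all_analysis.
From mathcomp.algebra_tactics Require Import ring.
Set Implicit Arguments. Unset Strict Implicit. Unset Printing Implicit Defensive.
Import Order.TTheory GRing.Theory Num.Theory.
Import numFieldNormedType.Exports.
Local Open Scope ring_scope.
Local Open Scope classical_set_scope.

Section SmoothAlgebra.
Variables (R : realType) (n : nat).
Implicit Types (f g u v : 'rV[R]_n -> R) (l : seq 'I_n).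

Lemma dpart_rcons l i f : dpart (rcons l i) f = dpart l (partial i f).
Proof. by elim: l => //= j l ->. Qed.

Lemma smooth_differentiable f x : smooth f -> differentiable f x.
Proof. by move=> sf; exact: (sf [::]). Qed.

Lemma smooth_partial i f : smooth f -> smooth (partial i f).
Proof. by move=> sf l x; rewrite -dpart_rcons; exact: sf. Qed.

Lemma smooth_cst (a : R) : smooth (fun _ : 'rV[R]_n => a).
Proof.
move=> l x; suff [c ->] : exists c, dpart l (fun _ => a) = cst c.
  exact: differentiable_cst.
elim: l => [|i l [c IH]] /=; first by exists a.
by exists 0; rewrite IH; apply/funext => y; rewrite /partial derive_cst.
Qed.

Definition smooth_upto k f :=
  forall l x, (size l <= k)%N -> differentiable (dpart l f) x.

Lemma dpartD k u v l : smooth_upto k u -> smooth_upto k v -> (size l <= k.+1)%N ->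
  dpart l (u + v) = dpart l u + dpart l v.
Proof.
move=> su sv; elim: l => //= i l IH hl; rewrite IH ?(ltnW hl) //.
by apply/funext => x; rewrite /partial deriveD //; apply: diff_derivable;
  [exact: su | exact: sv].
Qed.

Lemma smoothD u v : smooth u -> smooth v -> smooth (u + v).
Proof.
move=> su sv l x; rewrite (@dpartD (size l)) => [|? ? _|? ? _|//].
- by apply: differentiableD; [exact: su | exact: sv].
- exact: su.
- exact: sv.
Qed.

Lemma partialM i f g : smooth f -> smooth g ->
  partial i (f * g) = partial i f * g + f * partial i g.
Proof.
move=> sf sg; apply/funext => x.
rewrite /partial deriveM /=; last 2 first.
- exact/diff_derivable/smooth_differentiable.
- exact/diff_derivable/smooth_differentiable.
by rewrite addrC; congr (_ + _); exact: mulrC.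
Qed.

(* Leibniz's rule lowers the order of differentiation by one, so smoothness of
   a product is proved one order at a time. *)
Lemma smoothM f g : smooth f -> smooth g -> smooth (f * g).
Proof.
suff upto k : forall f g, smooth f -> smooth g -> smooth_upto k (f * g).
  by move=> sf sg l x; exact: (upto (size l)).
elim: k => [|k IH] {}f {}g sf sg l x.
  by case: l => //= _; apply: differentiableM; exact: smooth_differentiable.
case/lastP: l => [|l i] hl.
  by apply: differentiableM; exact: smooth_differentiable.
rewrite size_rcons ltnS in hl.
have su := IH _ _ (smooth_partial i sf) sg.
have sv := IH _ _ sf (smooth_partial i sg).
rewrite dpart_rcons partialM // (@dpartD k) ?(leqW hl) //.
exact: differentiableD (su _ _ hl) (sv _ _ hl).
Qed.

Lemma smooth_sum m (F : 'I_m -> 'rV[R]_n -> R) :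
  (forall i, smooth (F i)) -> smooth (fun x => \sum_(i < m) F i x).
Proof.
elim: m F => [|m IH] F hF.
  by under eq_fun do rewrite big_ord0; exact: smooth_cst.
under eq_fun do rewrite big_ord_recr.
exact: (smoothD (IH _ (fun i => hF _)) (hF ord_max)).
Qed.

End SmoothAlgebra.

Section Congruence.
Variables (T : comUnitRingType) (m : nat).
Implicit Types (M N Q P : 'M[T]_m).

Lemma invmx_eq M N : M *m N = 1%:M -> invmx M = N.
Proof.
move=> MN; have [uM _] := mulmx1_unit MN.
by rewrite -[invmx M]mulmx1 -MN mulmxA mulVmx // mul1mx.
Qed.

Lemma congruenceK M Q P : Q *m P = 1%:M -> P *m (Q *m M *m Q^T) *m P^T = M.
Proof.
move=> /mulmx1C PQ.
by rewrite !mulmxA PQ mul1mx -mulmxA -trmx_mul PQ trmx1 mulmx1.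
Qed.

Lemma invmx_congruence M Q P : M *m M = 1%:M -> Q *m P = 1%:M ->
  invmx (Q *m M *m Q^T) = P^T *m M *m P.
Proof.
move=> MM QP; apply: invmx_eq; have PQ := mulmx1C QP.
rewrite -!mulmxA [Q^T *m _]mulmxA -trmx_mul PQ trmx1 mul1mx.
by rewrite [M *m (M *m _)]mulmxA MM mul1mx.
Qed.

End Congruence.

Section HorizonMetric.
Variables (R : realType) (n : nat).
Implicit Types (p : 'rV[R]_n) (b : R).

Lemma minkowski_tr : (Defs.minkowski R n)^T = Defs.minkowski R n.
Proof. exact: tr_diag_mx. Qed.

Lemma minkowski_sqr : Defs.minkowski R n *m Defs.minkowski R n = 1%:M.
Proof.
apply/matrixP => i j; rewrite /Defs.minkowski mul_diag_mx !mxE.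
case: (eqVneq i j) => [->|_]; last by rewrite mulr0n mulr0.
by case: ifP; rewrite mulr1n ?mulr1 ?mulrNN ?mulr1.
Qed.

Definition sqnorm p : R := \sum_i p 0 i ^+ 2.

Lemma sqnorm_ge0 p : 0 <= sqnorm p.
Proof. by rewrite sumr_ge0 // => i _; rewrite sqr_ge0. Qed.

Lemma sqnorm_gt0 p i : p 0 i != 0 -> 0 < sqnorm p.
Proof.
move=> pi0; rewrite /sqnorm (bigD1 i) //= ltr_pwDl ?exprn_even_gt0 //.
by rewrite sumr_ge0 // => j _; rewrite sqr_ge0.
Qed.

(* The space-time covector (1, p). *)
Definition cons1 p (j : 'I_n.+1) : R := oapp (p 0) 1 (unlift ord0 j).

Lemma cons1_0 p : cons1 p ord0 = 1.
Proof. by rewrite /cons1 unlift_none. Qed.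

Lemma cons1_lift p i : cons1 p (lift ord0 i) = p 0 i.
Proof. by rewrite /cons1 liftK. Qed.

Definition frame p b : 'M[R]_n.+1 :=
  \matrix_(j, k) if k == ord0 then cons1 p j else if j == k then Num.sqrt b else 0.

Definition frame_inv p b : 'M[R]_n.+1 :=
  \matrix_(j, k) if k == ord0 then (if j == ord0 then 1 else - cons1 p j / Num.sqrt b)
                 else if j == k then (Num.sqrt b)^-1 else 0.

Definition horizon_metric p b : 'M[R]_n.+1 :=
  frame p b *m Defs.minkowski R n *m (frame p b)^T.

Lemma horizon_metricE p b j k : 0 <= b ->
  horizon_metric p b j k = cons1 p j * cons1 p k - b * ((j != ord0) && (j == k))%:R.
Proof.
move=> b_ge0; rewrite /horizon_metric /Defs.minkowski mul_mx_diag !mxE big_ord_recl.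
rewrite !mxE eqxx mulr1.
under eq_bigr => i _ do rewrite !mxE lift_eqF.
case: (unliftP ord0 j) => [j'|] ->; last first.
  by rewrite eqxx mulr0 subr0 big1 ?addr0 // => i _; rewrite eq_liftF !mul0r.
rewrite (bigD1 j') //= big1 ?addr0 => [|i /negbTE ne]; last first.
  by rewrite (inj_eq lift_inj) eq_sym ne !mul0r.
rewrite eqxx /=.
case: (unliftP ord0 k) => [k'|] ->; last by rewrite eq_liftF !mulr0 addr0 subr0.
rewrite !(inj_eq lift_inj); case: (eqVneq j' k') => [<-|_]; last first.
  by rewrite !mulr0 addr0 subr0.
by rewrite mulr1 mulrN1 mulNr -[Num.sqrt b * _]expr2 sqr_sqrtr.
Qed.

Lemma horizon_metric_tr p b : (horizon_metric p b)^T = horizon_metric p b.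
Proof. by rewrite /horizon_metric !trmx_mul trmxK minkowski_tr mulmxA. Qed.

Lemma horizon_metric00 p b : 0 <= b -> horizon_metric p b ord0 ord0 = 1.
Proof. by move=> b_ge0; rewrite horizon_metricE // cons1_0 eqxx mulr1 mulr0 subr0. Qed.

Lemma mul_frame_inv p b : 0 < b -> frame p b *m frame_inv p b = 1%:M.
Proof.
move=> b_gt0; have sb_neq0 : Num.sqrt b != 0 by rewrite sqrtr_eq0 -ltNge.
apply/matrixP => j k; rewrite !mxE big_ord_recl !mxE eqxx.
under eq_bigr => i _ do rewrite !mxE lift_eqF.
case: (unliftP ord0 j) => [j'|] ->; last first.
  rewrite big1 ?addr0 => [|i _]; last by rewrite eq_liftF !mul0r.
  rewrite cons1_0 mul1r; case: (unliftP ord0 k) => [k'|] ->.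
    by rewrite lift_eqF eq_liftF.
  by rewrite eqxx.
rewrite (bigD1 j') //= big1 ?addr0 => [|i /negbTE ne]; last first.
  by rewrite (inj_eq lift_inj) eq_sym ne !mul0r.
case: (unliftP ord0 k) => [k'|] ->; last first.
  by rewrite !eqxx lift_eqF /=; field.
rewrite !(inj_eq lift_inj) lift_eqF eq_liftF eqxx.
by case: (j' == k'); rewrite /= ?mulr0 ?add0r ?addr0 ?divff.
Qed.

Lemma horizon_metric_congruent p b : 0 < b ->
  exists2 P : 'M[R]_n.+1, P \in unitmx &
    P^T *m horizon_metric p b *m P = Defs.minkowski R n.
Proof.
move=> b_gt0; have fP := mul_frame_inv p b_gt0.
exists (frame_inv p b)^T; last by rewrite trmxK congruenceK.
by rewrite unitmx_tr; case: (mulmx1_unit fP).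
Qed.

Lemma invmx_horizon_metric00 p b : 0 < b ->
  invmx (horizon_metric p b) ord0 ord0 = 1 - sqnorm p / b.
Proof.
move=> b_gt0; have sb_neq0 : Num.sqrt b != 0 by rewrite sqrtr_eq0 -ltNge.
rewrite /horizon_metric (invmx_congruence minkowski_sqr (mul_frame_inv p b_gt0)).
rewrite /Defs.minkowski mul_mx_diag !mxE big_ord_recl !mxE !eqxx /= mulr1 mul1r.
under eq_bigr => i _ do rewrite !mxE lift_eqF cons1_lift eqxx.
rewrite /sqnorm mulr_suml -sumrN; congr (1 + _); apply: eq_bigr => i _.
by rewrite -{3}[b](@sqr_sqrtr _ b) ?ltW //; field.
Qed.

Lemma horizon_metric_time_space p b : 0 <= b ->
  \sum_(j < n) horizon_metric p b ord0 (lift ord0 j) * p 0 j = sqnorm p.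
Proof.
move=> b_ge0; apply: eq_bigr => j _.
by rewrite horizon_metricE // cons1_0 cons1_lift eqxx mulr0 subr0 mul1r expr2.
Qed.

Lemma horizon_metric_space p b : 0 <= b ->
  \sum_(j < n) \sum_(k < n)
      horizon_metric p b (lift ord0 j) (lift ord0 k) * p 0 j * p 0 k
    = sqnorm p * (sqnorm p - b).
Proof.
move=> b_ge0; rewrite {1}/sqnorm mulr_suml; apply: eq_bigr => j _.
under eq_bigr => k _ do
  rewrite horizon_metricE // !cons1_lift lift_eqF (inj_eq lift_inj) /= !mulrBl.
rewrite sumrB [X in _ - X](bigD1 j) //= eqxx [X in _ - (_ + X)]big1 ?addr0 => [|k]; last first.
  by rewrite eq_sym => /negbTE ->; rewrite mulr0 !mul0r.
rewrite mulrBr /sqnorm mulr_sumr; congr (_ - _); last by rewrite /= mulr1n; ring.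
by apply: eq_bigr => k _; ring.
Qed.

End HorizonMetric.

Section SurfaceMetric.
Variables (R : realType) (n : nat) (S : 'rV[R]_n -> R).
Hypothesis regular_S : forall x, S x = 0 -> grad_ne0 S x.

Definition grad x : 'rV[R]_n := \row_i partial i S x.

Lemma gradE x i : grad x 0 i = partial i S x.
Proof. by rewrite mxE. Qed.

Definition surface_weight x := sqnorm (grad x) + S x ^+ 2.

Lemma surface_weight_gt0 x : 0 < surface_weight x.
Proof.
rewrite /surface_weight; case: (eqVneq (S x) 0) => [/regular_S [i]|Sx_neq0].
  by rewrite -gradE => /sqnorm_gt0 ?; rewrite ltr_pwDl ?sqr_ge0.
by rewrite ltr_wpDl ?sqnorm_ge0 ?exprn_even_gt0.
Qed.

Definition surface_metric x := horizon_metric (grad x) (surface_weight x).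

Lemma smooth_surface_metric : smooth S -> forall j k, smooth (fun x => surface_metric x j k).
Proof.
move=> sS.
have s_grad i : smooth (fun x => grad x 0 i).
  by under eq_fun do rewrite gradE; exact: smooth_partial.
have s_cons1 j : smooth (fun x => cons1 (grad x) j).
  case: (unliftP ord0 j) => [i|] ->.
    by under eq_fun do rewrite cons1_lift; exact: s_grad.
  by under eq_fun do rewrite cons1_0; exact: smooth_cst.
have s_sqr f : smooth f -> smooth (fun x => f x ^+ 2).
  by move=> sf; under eq_fun do rewrite expr2; exact: smoothM.
have s_weight : smooth surface_weight.
  by apply: smoothD; [apply: smooth_sum => i; apply: s_sqr | apply: s_sqr].
move=> j k; under eq_fun => x do rewrite horizon_metricE ?ltW ?surface_weight_gt0 // -mulrN.
by apply: smoothD; apply: smoothM => //; exact: smooth_cst.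
Qed.


Lemma surface_metric_lorentzian : smooth S -> stationary_lorentzian_inv surface_metric.
Proof.
move=> sS; split=> [j k|x|x|x].
- exact: smooth_surface_metric.
- exact: horizon_metric_tr.
- exact/horizon_metric_congruent/surface_weight_gt0.
- by rewrite horizon_metric00 ?ltW ?surface_weight_gt0.
Qed.

Lemma ergosphere_surface_metric : ergosphere surface_metric = [set x | S x = 0].
Proof.
have g00 x : invmx (surface_metric x) ord0 ord0 = S x ^+ 2 / surface_weight x.
  rewrite invmx_horizon_metric00 ?surface_weight_gt0 //.
  by have := lt0r_neq0 (surface_weight_gt0 x); rewrite /surface_weight => ?; field.
rewrite /ergosphere; apply/seteqP; split=> x /=; rewrite g00; last by move=> ->; rewrite expr0n mul0r.
move/eqP; rewrite mulf_eq0 invr_eq0 (negbTE (lt0r_neq0 (surface_weight_gt0 x))).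
by rewrite orbF sqrf_eq0 => /eqP.
Qed.

Lemma event_horizon_surface_metric : event_horizon surface_metric S.
Proof.
move=> x Sx0; have b_ge0 := ltW (surface_weight_gt0 x).
under eq_bigr => j _ do under eq_bigr => k _ do rewrite -!gradE.
under [X in X != 0]eq_bigr => j _ do rewrite -gradE.
rewrite horizon_metric_space // horizon_metric_time_space //; split.
  by rewrite /surface_weight Sx0 expr0n addr0 subrr mulr0.
by have [i] := regular_S Sx0; rewrite -gradE => /sqnorm_gt0/lt0r_neq0.
Qed.

End SurfaceMetric.

Theorem proposition2p5 (R : realType) (n : nat) (S : 'rV[R]_n -> R) :
  smooth_closed_surface S ->
  exists g : 'rV[R]_n -> 'M[R]_n.+1,
    [/\ stationary_lorentzian_inv g,
        ergosphere g = [set x | S x = 0] &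
        event_horizon g S].
Proof.
case=> sS _ _ regular_S; exists (surface_metric S); split.
- exact: surface_metric_lorentzian.
- exact: ergosphere_surface_metric.
- exact: event_horizon_surface_metric.
Qed.
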